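(* Let $\Omega$ be a $D$-dimensional vector space over a finite field $\mathbb F$, $q=\sqrt{|\mathbb F|}$, and $\lambda\in\mathbb C\setminus\{0\}$. There is a unique $U_q(\mathfrak{sl}_2)$-module structure on $\mathbb C^{\mathcal L(\Omega)}$ such that for all $x\in\mathcal L(\Omega)$: $Ex=\lambda q^{-D}\sum_{x'\subset\mathrel{\cdot} x}x'$, $Fx=\lambda^{-1}q\sum_{x\subset\mathrel{\cdot} x'}x'$, $K^{\pm1}x=q^{\pm(D-2\dim x)}x$.
   Context: $\mathcal L(\Omega)$ is the set of all subspaces of $\Omega$, and $\mathbb C^{\mathcal L(\Omega)}$ is the complex vector space with basis $\mathcal L(\Omega)$. For subspaces $x,x'$, $x'\subset\mathrel{\cdot} x$ means $x'\subseteq x$ and $\dim x'=\dim x-1$ (covering relation). $U_q(\mathfrak{sl}_2)$ is the algebra over $\mathbb C$ generated by $E,F,K^{\pm1}$ with relations $KK^{-1}=K^{-1}K=1$, $qEK-q^{-1}KE=0$, $qKF-q^{-1}FK=0$, $EF-FE=\frac{K-K^{-1}}{q-q^{-1}}$. *)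

From HB Require Import structures.
From mathcomp Require Import all_boot all_order all_algebra all_field.
From mathcomp Require Import complex.
From mathcomp Require Import Rstruct.
Unset Printing Implicit Defensive.
Import Order.TTheory GRing.Theory Num.Theory.
Local Open Scope ring_scope.

Definition CC : numClosedFieldType := (Rdefinitions.R)[i].

(* L(Omega): the (finite) type of all subspaces of Omega = F^D.
   Omega = F^D as row vectors; its subspaces are {vspace 'rV[F]_D}.
   For F finite, the type of subspaces is finite. *)
Definition subsp (F : finFieldType) (D : nat) := {vspace 'rV[F]_D}.
HB.instance Definition _ (F : finFieldType) (D : nat) :=
  Finite.copy (subsp F D) (can_type (@VectorInternalTheory.vs2mxK F 'rV[F]_D)).

Section Lattice.
Variables (F : finFieldType) (D : nat).
Notation L := (subsp F D).

Definition covered (x' x : L) : bool := (x' <= x)%VS && ((\dim x').+1 == \dim x).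

Definition CL : lmodType CC := {ffun L -> CC^o}.

Definition bvec (x : L) : CL := [ffun y => (y == x)%:R].
End Lattice.
Arguments covered {F D}.
Arguments bvec {F D}.

Definition qF (F : finFieldType) : CC := sqrtC (#|F|%:R).

Definition is_lin (V : lmodType CC) (f : V -> V) : Prop :=
  forall (a : CC) (u v : V), f (a *: u + v) = a *: f u + f v.

Definition Uq_module (q : CC) (V : lmodType CC) (E Fo K Ki : V -> V) : Prop :=
  (@is_lin V E /\ @is_lin V Fo /\ @is_lin V K /\ @is_lin V Ki) /\
  (forall v, K (Ki v) = v) /\ (forall v, Ki (K v) = v) /\
  (forall v, q *: E (K v) - q^-1 *: K (E v) = 0) /\
  (forall v, q *: K (Fo v) - q^-1 *: Fo (K v) = 0) /\
  (forall v, E (Fo v) - Fo (E v) = (q - q^-1)^-1 *: (K v - Ki v)).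

Definition action_on_basis (F : finFieldType) (D : nat) (lam : CC)
  (E Fo K Ki : CL F D -> CL F D) : Prop :=
  let q := qF F in
  forall x : subsp F D,
  [/\ E (bvec x) = (lam * q ^- D) *: \sum_(x' : subsp F D | covered x' x) bvec x',
      Fo (bvec x) = (lam^-1 * q) *: \sum_(x' : subsp F D | covered x x') bvec x',
      K (bvec x) = q ^ (D%:Z - 2 * (\dim x)%:Z) *: bvec x &
      Ki (bvec x) = q ^ (- (D%:Z - 2 * (\dim x)%:Z)) *: bvec x].

From HB Require Import structures.
From mathcomp Require Import all_boot all_order all_algebra all_field.
From mathcomp Require Import zify ring.
Import GRing.Theory Num.Theory.
Local Open Scope ring_scope.

(* E lowers and F raises the dimension along covering pairs, so for a basis vector y the
   coefficient of z in (EF - FE) y counts common upper covers of y and z minus their common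
   lower covers.  For z <> y both numbers are 1 exactly when dim y = dim z and
   dim (y + z) = dim y + 1, and 0 otherwise, so they cancel.  For z = y they are the numbers
   of upper and lower covers of y, the Gaussian numbers [D - dim y] and [dim y] in base
   q^2 = |F| (obtained by double counting pairs (subspace, vector)); the scalar prefactor
   lambda q^-D * lambda^-1 q turns their difference into
   (q^(D - 2 dim y) - q^(2 dim y - D)) / (q - q^-1), which is the action of
   (K - K^-1) / (q - q^-1).  The K-relations hold because E and F shift dim by -1 and +1.
   Uniqueness holds because linear maps are determined by their values on the basis. *)

Section Subspaces.
Variables (K : fieldType) (vT : vectType K).
Implicit Types (U W X Y Z : {vspace vT}) (v : vT).

Lemma subv_dim_eq U W : (U <= W)%VS -> (\dim W <= \dim U)%N -> U = W.
Proof. by move=> sUW leWU; apply/eqP; rewrite eqEdim sUW. Qed.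

Lemma dimv_add_line U v : v \notin U -> \dim (U + <[v]>)%VS = (\dim U).+1.
Proof.
move=> vNU; apply/eqP; rewrite eqn_leq.
have -> : (\dim U < \dim (U + <[v]>)%VS)%N.
  by rewrite (ltn_leqif (dimv_leqif_sup (addvSl U _))) subv_add subvv -memvE.
rewrite andbT -addn1; apply: leq_trans (dimv_add_leqif U <[v]>) _.
by rewrite leq_add2l dim_vline leq_b1.
Qed.

Lemma cover_eq_add_line U Y v : (U <= Y)%VS -> \dim Y = (\dim U).+1 ->
  v \in Y -> v \notin U -> Y = (U + <[v]>)%VS.
Proof.
move=> sUY dY vY vNU; apply/esym/subv_dim_eq; last by rewrite dY dimv_add_line.
by rewrite subv_add sUY -memvE.
Qed.

Lemma covers_eq_addv X Y Z : Y != Z -> (Y <= X)%VS -> (Z <= X)%VS ->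
  \dim X = (\dim Y).+1 -> \dim X = (\dim Z).+1 -> X = (Y + Z)%VS.
Proof.
move=> neYZ sYX sZX dXY dXZ; apply/esym/subv_dim_eq; first by rewrite subv_add sYX.
rewrite dXY (ltn_leqif (dimv_leqif_sup (addvSl Y Z))) subv_add subvv /=.
apply: contra neYZ => sZY; apply/eqP/esym/subv_dim_eq => //.
by rewrite -ltnS -dXZ dXY.
Qed.

Lemma cocovers_eq_capv X Y Z : Y != Z -> (X <= Y)%VS -> (X <= Z)%VS ->
  \dim Y = (\dim X).+1 -> \dim Z = (\dim X).+1 -> X = (Y :&: Z)%VS.
Proof.
move=> neYZ sXY sXZ dYX dZX; apply/subv_dim_eq; first by rewrite subv_cap sXY.
rewrite -ltnS -dYX (ltn_leqif (dimv_leqif_sup (capvSl Y Z))) subv_cap subvv /=.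
apply: contra neYZ => sYZ; apply/eqP/subv_dim_eq => //.
by rewrite dZX dYX.
Qed.

End Subspaces.

Lemma double_count {I J : finType} (P : pred I) (R : pred J) (rel : I -> J -> bool) :
  (\sum_(i | P i) #|[pred j | R j && rel i j]|)%N =
  (\sum_(j | R j) #|[pred i | P i && rel i j]|)%N.
Proof.
under eq_bigr do rewrite -sum1_card.
rewrite (exchange_big_dep R) //= => [|i j _ /andP[]//].
apply: eq_bigr => j Rj; rewrite -sum1_card; apply: eq_bigl => i.
by rewrite !inE Rj.
Qed.

Lemma card_sub_pred1 (T : finType) (P : pred T) (w : T) :
  (forall x, P x -> x = w) -> #|P| = P w.
Proof.
move=> Pw; case Pw0: (P w).
  by apply: (@eq_card1 _ w) => x; rewrite !inE; apply/idP/eqP => [/Pw|->].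
by apply: eq_card0 => x; apply/negbTE; apply: contraFN Pw0 => Px; rewrite -(Pw x).
Qed.

Section CoveringCounts.
Context {F : finFieldType} {D : nat}.
Local Notation L := (subsp F D).
Local Notation V := 'rV[F]_D.
Local Notation Q := #|F|.
Implicit Types (a b x y z : L) (v : V).

Lemma card_finField_gt0 : (0 < Q)%N.
Proof. exact: ltnW (finNzRing_gt1 F). Qed.

Lemma covered_add_line a v : v \notin a -> covered a (a + <[v]>)%VS.
Proof. by move=> vNa; rewrite /covered addvSl dimv_add_line ?eqxx. Qed.

Lemma covered_eq_add_line a y v : covered a y -> v \in y -> v \notin a ->
  y = (a + <[v]>)%VS.
Proof. by case/andP=> say /eqP dy; apply: cover_eq_add_line. Qed.

Lemma card_vspaceD a y : (a <= y)%VS ->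
  #|[predD y & a]| = (Q ^ \dim a * (Q ^ (\dim y - \dim a) - 1))%N.
Proof.
move=> say; have cardI : #|[predI y & a]| = #|a|.
  by apply: eq_card => v; rewrite !inE andb_idl // => /(subvP say).
have := cardID (mem a) (mem y); rewrite cardI => /(canRL (addKn _)) ->.
by rewrite !card_vspace mulnBr muln1 -expnD subnKC // dimvS.
Qed.

Lemma card_covers_below a b : (a <= b)%VS ->
  (#|[pred y | covered a y && (y <= b)%VS]| * (Q - 1) = Q ^ (\dim b - \dim a) - 1)%N.
Proof.
move=> sab; have := double_count [pred y | covered a y && (y <= b)%VS]
  [predD b & a] (fun y v => v \in y).
rewrite (eq_bigr (fun _ => Q ^ \dim a * (Q - 1)))%N; last first.
  move=> y /andP[/andP[say /eqP dy] syb].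
  have := card_vspaceD a y say; rewrite -dy subSnn expn1 => <-.
  apply: eq_card => v; rewrite !inE -andbA.
  by case vy: (v \in y); rewrite ?andbF // (subvP syb v vy).
move=> /eqP; rewrite [X in _ == X](eq_bigr (fun _ => 1%N)); last first.
  move=> v /andP[vNa vb]; apply: (@eq_card1 _ ((a + <[v]>)%VS : L)) => y; rewrite !inE.
  apply/andP/eqP => [[/andP[cay _] vy]|->]; first exact: covered_eq_add_line.
  by rewrite covered_add_line // subv_add sab -memvE vb memvE addvSr.
rewrite !sum_nat_const muln1 (card_vspaceD a b sab) mulnCA.
by rewrite eqn_pmul2l ?expn_gt0 ?card_finField_gt0 // => /eqP.
Qed.

Lemma card_cocovers_above d a b : (a <= b)%VS -> \dim b = (\dim a + d)%N ->
  (#|[pred h : L | (a <= h)%VS && covered h b]| * (Q - 1) = Q ^ d - 1)%N.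
Proof.
have Q1 := finNzRing_gt1 F.
elim: d a => [|[|e] IH] a sab db.
- rewrite eq_card0 // => h; rewrite !inE; apply/andP => -[sah /andP[_ /eqP dh]].
  by move: (dimvS sah); rewrite -ltnS dh db addn0 ltnn.
- rewrite (@eq_card1 _ a) ?mul1n ?expn1 // => h; rewrite !inE.
  apply/andP/eqP => [[sah /andP[_ /eqP dh]]|->].
    by apply/esym/subv_dim_eq; rewrite // -ltnS dh db addn1.
  by rewrite subvv /covered sab db addn1 eqxx.
have := double_count [pred h : L | (a <= h)%VS && covered h b]
  [predD b & a] (fun h v => v \in h).
rewrite (eq_bigr (fun _ => Q ^ \dim a * (Q ^ e.+1 - 1)))%N; last first.
  move=> h /andP[sah /andP[shb /eqP dh]].
  have dha : (\dim h - \dim a = e.+1)%N by rewrite db in dh; lia.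
  rewrite -dha -card_vspaceD //; apply: eq_card => v; rewrite !inE -andbA.
  by case vh: (v \in h); rewrite ?andbF // (subvP shb v vh).
move=> /(congr1 (muln^~ (Q - 1)%N)) /=; rewrite !big_distrl /=.
rewrite [X in _ = X](eq_bigr (fun _ => Q ^ e.+1 - 1))%N; last first.
  move=> v /andP[vNa vb]; rewrite -(IH (a + <[v]>)%VS); last first.
  - by rewrite dimv_add_line // db !addnS.
  - by rewrite subv_add sab -memvE.
  congr (_ * _)%N; apply: eq_card => h; rewrite !inE.
  by rewrite subv_add -memvE andbAC.
rewrite !sum_nat_const (card_vspaceD a b sab) db addKn -!mulnA mulnCA => /eqP.
rewrite eqn_pmul2l ?expn_gt0 ?card_finField_gt0 // mulnCA [X in _ == X]mulnC eqn_pmul2l.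
  by move=> /eqP.
by rewrite subn_gt0 (leq_ltn_trans _ (ltn_expl e.+1 Q1)).
Qed.

Lemma dimv_full : \dim (fullv : {vspace V}) = D.
Proof. by rewrite dimvf /dim /= mul1n. Qed.

Lemma dim_subsp_le y : (\dim y <= D)%N.
Proof. by have := dimvS (subvf (y : {vspace V})); rewrite dimv_full. Qed.

Lemma card_upper_covers y :
  (#|[pred x | covered y x]| * (Q - 1) = Q ^ (D - \dim y) - 1)%N.
Proof.
have := card_covers_below y fullv (subvf _); rewrite dimv_full => <-.
by congr (_ * _)%N; apply: eq_card => x; rewrite !inE subvf andbT.
Qed.

Lemma card_lower_covers y : (#|[pred x | covered x y]| * (Q - 1) = Q ^ \dim y - 1)%N.
Proof.
rewrite -(card_cocovers_above (\dim y) 0%VS y (sub0v y)) ?dimv0 //.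
by congr (_ * _)%N; apply: eq_card => x; rewrite !inE sub0v.
Qed.

Lemma card_common_upper_covers y z : y != z ->
  #|[pred x | covered y x && covered z x]| =
  covered y (y + z)%VS && covered z (y + z)%VS.
Proof.
move=> neyz; apply: card_sub_pred1 => x /andP[/andP[syx /eqP dyx] /andP[szx /eqP dzx]].
exact: covers_eq_addv.
Qed.

Lemma card_common_lower_covers y z : y != z ->
  #|[pred x | covered x y && covered x z]| =
  covered (y :&: z)%VS y && covered (y :&: z)%VS z.
Proof.
move=> neyz; apply: card_sub_pred1 => x /andP[/andP[sxy /eqP dxy] /andP[sxz /eqP dxz]].
exact: cocovers_eq_capv.
Qed.

Lemma card_common_covers y z : y != z ->
  #|[pred x | covered y x && covered z x]| = #|[pred x | covered x y && covered x z]|.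
Proof.
move=> neyz; rewrite card_common_upper_covers // card_common_lower_covers //.
rewrite /covered addvSl addvSr capvSl capvSr /=.
(* both sides say dim y = dim z = dim (y :&: z) + 1 = dim (y + z) - 1 *)
have := dimv_sum_cap y z.
by case: eqP => [|]; case: eqP => [|]; case: eqP => [|]; case: eqP => [|]; lia.
Qed.
End CoveringCounts.

Section RelationOperators.
Context {F : finFieldType} {D : nat}.
Local Notation L := (subsp F D).
Local Notation M := (CL F D).

Definition rel_op (w : L -> CC) (P : rel L) (v : M) : M :=
  [ffun y => w y * \sum_(x | P y x) (v x : CC)].

Lemma rel_op_lin w P : is_lin M (rel_op w P).
Proof.
move=> a u v; have addZE (s t : M) x : (a *: s + t) x = a * s x + t x by rewrite !ffunE.
apply/ffunP => y; rewrite addZE !ffunE (eq_bigr (fun x => a * u x + v x)) => [|x _].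
  rewrite big_split /= (_ : \sum_(x | P y x) a * u x = a * \sum_(x | P y x) (u x : CC)).
    by rewrite mulrDr mulrCA.
  by rewrite mulr_sumr.
by rewrite addZE.
Qed.

Lemma ffunZE (a : CC) (u : M) y : (a *: u) y = a * u y.
Proof. by rewrite !ffunE. Qed.

Lemma ffunBE (u w : M) y : (u - w) y = u y - w y.
Proof. by rewrite !ffunE. Qed.

Lemma sum_natr_eq (P : pred L) y : \sum_(x | P x) ((x == y)%:R : CC) = (P y)%:R.
Proof.
case Py: (P y); last by rewrite big1 // => x Px; case: eqP Px => // ->; rewrite Py.
by rewrite (bigD1 y) // big1 /= ?eqxx ?addr0 // => x /andP[_ /negPf->].
Qed.

Lemma sum_bvecE (P : pred L) y : (\sum_(x | P x) bvec x) y = (P y)%:R.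
Proof.
rewrite sum_ffunE -sum_natr_eq; apply: eq_bigr => x _.
by rewrite ffunE eq_sym.
Qed.

Lemma rel_op_bvec w P x y : rel_op w P (bvec x) y = w y * (P y x)%:R.
Proof.
rewrite ffunE -sum_natr_eq; congr (_ * _); apply: eq_bigr => z _.
by rewrite ffunE.
Qed.

Lemma rel_op_diag w v y : rel_op w (fun y x => x == y) v y = w y * v y.
Proof. by rewrite ffunE big_pred1_eq. Qed.

Lemma exchange_sum_card (P : pred L) (R : rel L) (w : L -> CC) :
  \sum_(x | P x) \sum_(z | R x z) w z = \sum_z #|[pred x | P x && R x z]|%:R * w z.
Proof.
rewrite (exchange_big_dep predT) //=; apply: eq_bigr => z _.
transitivity (\sum_(x in [pred x | P x && R x z]) w z).
  by apply: eq_bigl => x; rewrite inE.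
by rewrite sumr_const mulr_natl.
Qed.

Lemma rel_op_comp a b (P R : rel L) v y :
  rel_op (fun=> a) P (rel_op (fun=> b) R v) y =
  a * b * \sum_z #|[pred x | P y x && R x z]|%:R * (v z : CC).
Proof.
rewrite ffunE (eq_bigr (fun x => b * \sum_(z | R x z) (v z : CC))) => [|x _]; last first.
  by rewrite ffunE.
by rewrite -mulr_sumr mulrA exchange_sum_card.
Qed.

Lemma bvec_decomp (v : M) : v = \sum_x v x *: bvec x.
Proof.
apply/ffunP => y; rewrite sum_ffunE (bigD1 y) // big1 /= => [|x /negPf neyx].
  by rewrite !ffunE eqxx /= addr0 -[RHS]/(v y * 1) mulr1.
by rewrite !ffunE eq_sym neyx scaler0.
Qed.

Lemma is_lin_eq_bvec (f g : M -> M) : is_lin M f -> is_lin M g ->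
  (forall x, f (bvec x) = g (bvec x)) -> f =1 g.
Proof.
have lin0 h : is_lin M h -> h 0 = 0.
  by move=> linh; have := linh (-1) 0 0; rewrite scaler0 addr0 scaleN1r addNr.
move=> linf ling fg v; rewrite [v]bvec_decomp; elim: (index_enum _) => [|x r IH].
  by rewrite !big_nil !lin0.
by rewrite !big_cons linf ling fg IH.
Qed.

End RelationOperators.

(* C and H are the q^2-integers [n] and [k]. *)
Lemma qint_sqr_diff [K : fieldType] [q C H : K] [n k : nat] : q != 0 -> q ^+ 2 != 1 ->
  C * (q ^+ 2 - 1) = q ^+ (2 * n) - 1 -> H * (q ^+ 2 - 1) = q ^+ (2 * k) - 1 ->
  q / q ^+ (n + k) * (C - H) = (q - q^-1)^-1 * (q ^+ n / q ^+ k - q ^+ k / q ^+ n).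
Proof.
move=> q0 q2N1 hC hH; have q21 : q ^+ 2 - 1 != 0 by rewrite subr_eq0.
have -> : C = (q ^+ n ^+ 2 - 1) / (q ^+ 2 - 1) by rewrite -exprM mulnC -hC mulfK.
have -> : H = (q ^+ k ^+ 2 - 1) / (q ^+ 2 - 1) by rewrite -exprM mulnC -hH mulfK.
have qVq : q - q^-1 != 0.
  by rewrite -[q - _](mulfK q0) mulrBl mulVf // -expr2 mulf_neq0 ?subr_eq0 ?invr_eq0.
rewrite exprD; field.
by rewrite q0 q21 !expf_neq0.
Qed.

Lemma expfz_sub_double (K : fieldType) (q : K) (n k : nat) : q != 0 -> (k <= n)%N ->
  q ^ (n%:Z - 2 * k%:Z) = q ^+ (n - k) / q ^+ k.
Proof.
move=> q0 kn; have -> : n%:Z - 2 * k%:Z = (n - k)%N%:Z + (- k%:Z).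
  by rewrite -subzn //; ring.
by rewrite expfzDr // exprnN.
Qed.

Section UqModule.
Variables (F : finFieldType) (D : nat) (lam : CC).
Hypothesis lam_neq0 : lam != 0.
Local Notation L := (subsp F D).
Local Notation M := (CL F D).
Local Notation q := (qF F).
Local Notation Q := #|F|.

Lemma qF_sqr : q ^+ 2 = Q%:R.
Proof. by rewrite /qF sqrtCK. Qed.

Lemma qF_neq0 : q != 0.
Proof.
apply/eqP => q0; have := @card_finField_gt0 F.
by rewrite lt0n -(pnatr_eq0 CC) -qF_sqr q0 expr0n /= eqxx.
Qed.

Lemma qF_sqr_neq1 : q ^+ 2 != 1.
Proof. by rewrite qF_sqr pnatr_eq1 gtn_eqF ?finNzRing_gt1. Qed.

Lemma qF_count [c m : nat] : (c * (Q - 1) = Q ^ m - 1)%N ->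
  c%:R * (q ^+ 2 - 1) = q ^+ (2 * m) - 1.
Proof.
move=> /(congr1 (fun n => n%:R : CC)).
by rewrite natrM !natrB ?expn_gt0 ?card_finField_gt0 // natrX -qF_sqr -exprM mulnC.
Qed.

Definition kexp (y : L) : int := D%:Z - 2 * (\dim y)%:Z.

Definition Eop : M -> M := rel_op (fun=> lam * q ^- D) covered.
Definition Fop : M -> M := rel_op (fun=> lam^-1 * q) (fun y x => covered x y).
Definition Kop : M -> M := rel_op (fun y => q ^ kexp y) (fun y x => x == y).
Definition Kiop : M -> M := rel_op (fun y => q ^ (- kexp y)) (fun y x => x == y).

Lemma kexp_covered y x : covered y x -> kexp x = kexp y - 2.
Proof. by case/andP=> _ /eqP dx; rewrite /kexp -dx -[(\dim y).+1]addn1 PoszD; ring. Qed.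

Lemma kexp_inv y : q ^ kexp y * q ^ (- kexp y) = 1.
Proof. by rewrite -expfzDr ?qF_neq0 // subrr expr0z. Qed.

Lemma Kop_Kiop : cancel Kiop Kop.
Proof. by move=> v; apply/ffunP => y; rewrite !rel_op_diag mulrA kexp_inv mul1r. Qed.

Lemma Kiop_Kop : cancel Kop Kiop.
Proof.
by move=> v; apply/ffunP => y; rewrite !rel_op_diag mulrA [_ * q ^ kexp y]mulrC kexp_inv mul1r.
Qed.

Lemma qkexp_covered y x : covered y x -> q ^ kexp x = q ^ kexp y / q ^+ 2.
Proof. by move/kexp_covered->; rewrite expfzDr ?qF_neq0 // exprnN. Qed.

Lemma Eop_Kop v : q *: Eop (Kop v) - q^-1 *: Kop (Eop v) = 0.
Proof.
apply/ffunP => y; rewrite /Eop /Kop ffunBE !ffunZE rel_op_diag !ffunE.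
under eq_bigr => x cyx do rewrite rel_op_diag (qkexp_covered _ _ cyx).
rewrite -mulr_sumr; move: (\sum_(x | covered y x) _) => S.
by have q0 := qF_neq0; field; rewrite expf_neq0.
Qed.

Lemma qkexp_covering x y : covered x y -> q ^ kexp x = q ^ kexp y * q ^+ 2.
Proof. by move/qkexp_covered->; rewrite divfK // expf_neq0 ?qF_neq0. Qed.

Lemma Kop_Fop v : q *: Kop (Fop v) - q^-1 *: Fop (Kop v) = 0.
Proof.
apply/ffunP => y; rewrite /Fop /Kop ffunBE !ffunZE rel_op_diag !ffunE.
under [X in _ - _ * (_ * X)]eq_bigr => x cxy do rewrite rel_op_diag (qkexp_covering _ _ cxy).
rewrite -mulr_sumr; move: (\sum_(x | covered x y) _) => S.
by have q0 := qF_neq0; field; rewrite lam_neq0.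
Qed.

Lemma Eop_Fop_commutatorE v y : (Eop (Fop v) - Fop (Eop v)) y =
  q / q ^+ D * (#|[pred x | covered y x]|%:R - #|[pred x | covered x y]|%:R) * v y.
Proof.
rewrite ffunBE !rel_op_comp [lam^-1 * q * _]mulrC -mulrBr -sumrB.
rewrite (bigD1 y) // big1 /= => [|z nezy]; last first.
  by rewrite card_common_covers 1?eq_sym // subrr.
have cover_self (b : pred L) : #|[pred x | b x && b x]| = #|[pred x | b x]|.
  by apply: eq_card => x; rewrite !inE andbb.
rewrite addr0 -mulrBl !cover_self mulrA; have q0 := qF_neq0.
suff -> : lam / q ^+ D * (lam^-1 * q) = q / q ^+ D by [].
by field; rewrite lam_neq0 expf_neq0.
Qed.

Lemma Eop_Fop v : Eop (Fop v) - Fop (Eop v) = (q - q^-1)^-1 *: (Kop v - Kiop v).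
Proof.
apply/ffunP => y; rewrite Eop_Fop_commutatorE ffunZE ffunBE !rel_op_diag -mulrBl.
rewrite -invr_expz expfz_sub_double ?qF_neq0 ?dim_subsp_le // invf_div mulrA.
rewrite -(qint_sqr_diff qF_neq0 qF_sqr_neq1 (qF_count (card_upper_covers y))
  (qF_count (card_lower_covers y))).
by rewrite subnK ?dim_subsp_le.
Qed.

Lemma Uq_module_ops : Uq_module q M Eop Fop Kop Kiop.
Proof.
split; first by do !split; apply: rel_op_lin.
by do !split; [exact: Kop_Kiop | exact: Kiop_Kop | exact: Eop_Kop | exact: Kop_Fop |
  exact: Eop_Fop].
Qed.

Lemma action_on_basis_ops : action_on_basis F D lam Eop Fop Kop Kiop.
Proof.
move=> x; split; apply/ffunP => y; rewrite rel_op_bvec ffunE ?sum_bvecE //.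
all: by rewrite ffunE eq_sym; case: eqP => [->|_]; rewrite ?mulr0 ?scaler0.
Qed.

End UqModule.

Theorem mainTheorem14 (F : finFieldType) (D : nat) (lam : CC) (hlam : lam != 0) :
  exists E Fo K Ki : CL F D -> CL F D,
    [/\ @Uq_module (qF F) (CL F D) E Fo K Ki,
        action_on_basis F D lam E Fo K Ki &
        forall E' Fo' K' Ki' : CL F D -> CL F D,
          @Uq_module (qF F) (CL F D) E' Fo' K' Ki' ->
          action_on_basis F D lam E' Fo' K' Ki' ->
          [/\ E' =1 E, Fo' =1 Fo, K' =1 K & Ki' =1 Ki]].
Proof.
exists (Eop F D lam), (Fop F D lam), (Kop F D), (Kiop F D).
split; [exact: Uq_module_ops | exact: action_on_basis_ops |].
move=> E' Fo' K' Ki' [[linE [linF [linK linKi]]] _] act'.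
split; apply: is_lin_eq_bvec => //; try exact: rel_op_lin; move=> x;
  by case: (act' x) (action_on_basis_ops F D lam x) => ? ? ? ? [? ? ? ?]; congruence.
Qed.
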